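(* Let $(\gamma_n)_{n\ge 0}$ be a sequence of positive reals satisfying conditions (C1)–(C7) below, and let $(p_n)$ be the associated symmetric orthonormal polynomials. Then for every $\omega\in\mathbb{R}$ the limits below exist and satisfy \[ \lim_{n\to\infty}\frac{\sum_{k=0}^n p_k^2(\omega)}{\sum_{k=0}^n \frac{1}{\gamma_k}}=\frac12\lim_{n\to\infty}\gamma_n\bigl(p_n^2(\omega)+p_{n+1}^2(\omega)\bigr), \] and the convergence of both limits is uniform on every compact subset of $\mathbb{R}$.
   Context: Given positive reals $\gamma_n>0$ ($n\ge 0$), set $\gamma_{-1}=1$, $p_{-1}(\omega)=0$, $p_0(\omega)=1$, and define polynomials by $\gamma_n p_{n+1}(\omega)=\omega p_n(\omega)-\gamma_{n-1}p_{n-1}(\omega)$ for $n\ge0$. Let $\Delta_n=\gamma_{n+1}-\gamma_n$ and $\Delta^2_n=\Delta_{n+1}-\Delta_n$. The conditions are: (C1) $\gamma_n\to\infty$; (C2) $\Delta_n\to 0$; (C3) there exist $n_0,m_0$ such that $\gamma_{n+m}>\gamma_n$ for all $n\ge n_0$, $m\ge m_0$; (C4) $\sum_{j\ge0}1/\gamma_j=\infty$; (C5) there exists $\kappa>1$ with $\sum_{j\ge0}\gamma_j^{-\kappa}<\infty$; (C6) $\sum_{n\ge0}|\Delta_n|/\gamma_n^2<\infty$; (C7) $\sum_{n\ge0}|\Delta^2_n|/\gamma_n<\infty$. *)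

From Stdlib Require Import Reals Lra Rtopology.
Open Scope R_scope.

(* gamma_{n-1} with the convention gamma_{-1} = 1 *)
Definition gprev (g : nat -> R) (n : nat) : R :=
  match n with O => 1 | S k => g k end.

(* ppair g w n = (p_{n-1}(w), p_n(w)), with p_{-1} = 0, p_0 = 1 and
   gamma_n p_{n+1} = w p_n - gamma_{n-1} p_{n-1}. *)
Fixpoint ppair (g : nat -> R) (w : R) (n : nat) : R * R :=
  match n with
  | O => (0, 1)
  | S k => let (a, b) := ppair g w k in
           (b, (w * b - gprev g k * a) / g k)
  end.

Definition p (g : nat -> R) (n : nat) (w : R) : R := snd (ppair g w n).

Definition Delta (g : nat -> R) (n : nat) : R := g (S n) - g n.
Definition Delta2 (g : nat -> R) (n : nat) : R := Delta g (S n) - Delta g n.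

Definition series_converges (a : nat -> R) : Prop :=
  exists l, Un_cv (fun N => sum_f_R0 a N) l.

Definition cond1 (g : nat -> R) : Prop := cv_infty g.
Definition cond2 (g : nat -> R) : Prop := Un_cv (Delta g) 0.
Definition cond3 (g : nat -> R) : Prop :=
  exists n0 m0 : nat, forall n m, (n0 <= n)%nat -> (m0 <= m)%nat -> g (n + m)%nat > g n.
Definition cond4 (g : nat -> R) : Prop := cv_infty (fun N => sum_f_R0 (fun j => / g j) N).
Definition cond5 (g : nat -> R) : Prop :=
  exists kappa, 1 < kappa /\ series_converges (fun j => Rpower (g j) (- kappa)).
Definition cond6 (g : nat -> R) : Prop :=
  series_converges (fun n => Rabs (Delta g n) / (g n) ^ 2).
Definition cond7 (g : nat -> R) : Prop :=
  series_converges (fun n => Rabs (Delta2 g n) / g n).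

Definition unif_cv_on (K : R -> Prop) (f : nat -> R -> R) (L : R -> R) : Prop :=
  forall eps, eps > 0 -> exists N : nat, forall n x, (N <= n)%nat -> K x ->
    Rabs (f n x - L x) < eps.

(* For |w| <= M and large n the Lyapunov quantity
     V_n = g_(n+1) (p_(n+1)^2 + p_(n+2)^2) - w p_(n+1) p_(n+2) - Delta_n p_(n+1)^2
   is comparable to g_(n+1) (p_(n+1)^2 + p_(n+2)^2), and one step of the recurrence changes it
   by at most eps_n V_n, where eps_n involves only Delta^2_n / g_n and Delta_(n+1) / g_(n+1)^2,
   which are summable by (C7) and (C6).  Hence V_n converges uniformly, and so does the energy
   B_n = g_n (p_n^2 + p_(n+1)^2), which differs from V_(n-1) by O(1 / g_n).  Finally
   sum_k B_k / g_k telescopes to 2 sum_k p_k^2 up to bounded boundary terms, and a weighted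
   Cesaro argument with the weights 1 / g_k, whose sum diverges by (C4), gives the limit of the
   ratio. *)

From Pilot Require Import Defs.
From Stdlib Require Import Reals Lra Lia Rtopology.
Open Scope R_scope.

Lemma p_0 g w : p g 0 w = 1.
Proof. reflexivity. Qed.

Lemma p_1 g w : p g 1 w = w / g 0%nat.
Proof. unfold p; simpl; f_equal; ring. Qed.

Lemma p_SS g w n :
  p g (S (S n)) w = (w * p g (S n) w - g n * p g n w) / g (S n).
Proof. unfold p; simpl; destruct (ppair g w n); reflexivity. Qed.

Lemma Rabs_mult_le_sum_sq a b : Rabs (a * b) <= (a ^ 2 + b ^ 2) / 2.
Proof.
  assert (0 <= (a - b) ^ 2) by apply pow2_ge_0; assert (0 <= (a + b) ^ 2) by apply pow2_ge_0.
  unfold Rabs; destruct Rcase_abs; nra.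
Qed.

Lemma sq_le_of_Rabs_le a C : Rabs a <= C -> a ^ 2 <= C ^ 2.
Proof. rewrite <- pow2_abs; intro H; assert (0 <= Rabs a) by apply Rabs_pos; nra. Qed.

Fixpoint tail_sum (a : nat -> R) (m k : nat) : R :=
  match k with O => 0 | S k' => tail_sum a m k' + a (m + k')%nat end.

Definition small_tails (a : nat -> R) : Prop :=
  forall e, e > 0 -> exists N, forall m k, (N <= m)%nat -> tail_sum a m k <= e.

Lemma tail_sum_nonneg a m k : (forall n, 0 <= a n) -> 0 <= tail_sum a m k.
Proof. intro H; induction k; simpl; [lra | specialize (H (m + k)%nat); lra]. Qed.

Lemma tail_sum_plus a b m k :
  tail_sum (fun n => a n + b n) m k = tail_sum a m k + tail_sum b m k.
Proof. induction k; simpl; [ring | rewrite IHk; ring]. Qed.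

Lemma tail_sum_S a m k :
  tail_sum a (S m) k = sum_f_R0 a (m + k) - sum_f_R0 a m.
Proof.
  induction k; simpl.
  - rewrite Nat.add_0_r; ring.
  - rewrite IHk, Nat.add_succ_r; simpl; ring.
Qed.

Lemma small_tails_of_series_converges a : series_converges a -> small_tails a.
Proof.
  intros [l Hl] e He.
  destruct (Hl (e / 2)) as [N HN]; [lra|].
  exists (S N); intros [|m] k Hm; [lia|].
  rewrite tail_sum_S.
  assert (H1 := HN (m + k)%nat ltac:(lia)); assert (H2 := HN m ltac:(lia)).
  unfold R_dist, Rabs in *; repeat destruct Rcase_abs; lra.
Qed.

Lemma small_tails_le a b C j : small_tails a -> 0 <= C ->
  (exists N0, forall n, (N0 <= n)%nat -> 0 <= b n <= C * a (n + j)%nat) ->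
  small_tails b.
Proof.
  intros Ha HC [N0 HN0] e He.
  destruct (Ha (e / (C + 1))) as [N HN]; [apply Rdiv_lt_0_compat; lra|].
  exists (Nat.max N N0); intros m k Hm.
  assert (Hb : tail_sum b m k <= C * tail_sum a (m + j) k).
  { induction k; simpl; [lra|].
    destruct (HN0 (m + k)%nat ltac:(lia)) as [_ H].
    replace (m + k + j)%nat with (m + j + k)%nat in H by lia; lra. }
  assert (Hs := HN (m + j)%nat k ltac:(lia)).
  assert (C * (e / (C + 1)) <= e).
  { apply (Rmult_le_reg_r (C + 1)); [lra|].
    unfold Rdiv; rewrite Rmult_assoc, Rmult_assoc, Rinv_l by lra; nra. }
  assert (C * tail_sum a (m + j) k <= C * (e / (C + 1))) by (apply Rmult_le_compat_l; lra).
  lra.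
Qed.

Lemma small_tails_plus a b : small_tails a -> small_tails b ->
  small_tails (fun n => a n + b n).
Proof.
  intros Ha Hb e He.
  destruct (Ha (e / 2)) as [N1 H1]; [lra|].
  destruct (Hb (e / 2)) as [N2 H2]; [lra|].
  exists (Nat.max N1 N2); intros m k Hm; rewrite tail_sum_plus.
  specialize (H1 m k ltac:(lia)); specialize (H2 m k ltac:(lia)); lra.
Qed.

(** * Sequences with summable relative increments *)

Lemma relative_increment_tail_bounds (v e : nat -> R) m k :
  (forall n, 0 <= e n) ->
  (forall n, (m <= n)%nat -> 0 <= v n /\ Rabs (v (S n) - v n) <= e n * v n) ->
  tail_sum e m k <= 1 ->
  v m * (1 - tail_sum e m k) <= v (m + k)%nat /\
  v (m + k)%nat * (1 - tail_sum e m k) <= v m.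
Proof.
  intros He Hv; induction k as [|k IH]; intro Hs; simpl in *.
  - rewrite Nat.add_0_r; lra.
  - assert (Hx := He (m + k)%nat).
    destruct (IH ltac:(lra)) as [I1 I2].
    destruct (Hv (m + k)%nat ltac:(lia)) as [Hvk Hd].
    destruct (Hv m ltac:(lia)) as [Hvm _].
    assert (Hs0 := tail_sum_nonneg e m k He).
    rewrite Nat.add_succ_r.
    set (s := tail_sum e m k) in *; set (x := e (m + k)%nat) in *.
    set (vk := v (m + k)%nat) in *; set (vk' := v (S (m + k))) in *.
    assert (-(x * vk) <= vk' - vk <= x * vk) by (unfold Rabs in Hd; destruct Rcase_abs; lra).
    split; nra.
Qed.

Definition unif_cauchy_on {X : Type} (P : X -> Prop) (f : nat -> X -> R) : Prop :=
  forall eps, eps > 0 -> exists N, forall n m x, (N <= n)%nat -> (N <= m)%nat -> P x ->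
    Rabs (f n x - f m x) <= eps.

Section RelativeIncrements.

Variables (X : Type) (P : X -> Prop) (V : nat -> X -> R) (e : nat -> R) (N0 : nat).
Hypothesis e_nonneg : forall n, 0 <= e n.
Hypothesis e_small_tails : small_tails e.
Hypothesis V_nonneg : forall n x, (N0 <= n)%nat -> P x -> 0 <= V n x.
Hypothesis V_increment : forall n x, (N0 <= n)%nat -> P x ->
  Rabs (V (S n) x - V n x) <= e n * V n x.

Let V_step_from m x : (N0 <= m)%nat -> P x -> forall n, (m <= n)%nat ->
  0 <= V n x /\ Rabs (V (S n) x - V n x) <= e n * V n x.
Proof. intros Hm Hx n Hn; split; [apply V_nonneg | apply V_increment]; auto; lia. Qed.

Lemma relative_increments_bounded :
  (forall m, exists K, forall x, P x -> V m x <= K) ->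
  exists N Cb, 0 <= Cb /\ forall n x, (N <= n)%nat -> P x -> V n x <= Cb.
Proof.
  intros Hbound.
  destruct (e_small_tails (1 / 2)) as [N1 HN1]; [lra|].
  set (N := Nat.max N0 N1).
  destruct (Hbound N) as [K HK].
  exists N, (2 * Rmax K 0); split; [assert (H := Rmax_r K 0); lra|].
  intros n x Hn Hx.
  assert (Hs := HN1 N (n - N)%nat ltac:(lia)).
  destruct (relative_increment_tail_bounds (fun j => V j x) e N (n - N) e_nonneg
              (V_step_from N x ltac:(lia) Hx) ltac:(lra)) as [_ H].
  replace (N + (n - N))%nat with n in H by lia.
  assert (Ht := tail_sum_nonneg e N (n - N) e_nonneg).
  assert (Hvn := V_nonneg n x ltac:(lia) Hx).
  assert (HKx := HK x Hx); assert (HK0 := Rmax_l K 0); simpl in H; nra.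
Qed.

(* Past a point where the tails of [e] are below [s], all terms stay within [s * Cb] of the
   value at that point. *)
Lemma relative_increments_unif_cauchy N Cb :
  0 <= Cb -> (forall n x, (N <= n)%nat -> P x -> V n x <= Cb) ->
  unif_cauchy_on P V.
Proof.
  intros HCb Hup eps Heps.
  set (s := Rmin (1 / 2) (eps / (2 * Cb + 1))).
  assert (Hs1 : s <= 1 / 2) by apply Rmin_l.
  assert (Hs2 : s <= eps / (2 * Cb + 1)) by apply Rmin_r.
  assert (Hs0 : 0 < s) by (apply Rmin_glb_lt; [lra | apply Rdiv_lt_0_compat; lra]).
  assert (Hs2' : s * (2 * Cb + 1) <= eps).
  { apply (Rmult_le_compat_r (2 * Cb + 1)) in Hs2; [|lra].
    unfold Rdiv in Hs2; rewrite Rmult_assoc, Rinv_l in Hs2 by lra; lra. }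
  destruct (e_small_tails s Hs0) as [N2 HN2].
  set (N' := Nat.max (Nat.max N0 N) N2); exists N'.
  assert (Hnear : forall n x, (N' <= n)%nat -> P x -> Rabs (V n x - V N' x) <= s * Cb).
  { intros n x Hn Hx.
    assert (Ht := HN2 N' (n - N')%nat ltac:(lia)).
    assert (Ht0 := tail_sum_nonneg e N' (n - N') e_nonneg).
    destruct (relative_increment_tail_bounds (fun j => V j x) e N' (n - N') e_nonneg
                (V_step_from N' x ltac:(lia) Hx) ltac:(lra)) as [H1 H2].
    replace (N' + (n - N'))%nat with n in H1, H2 by lia.
    assert (Hn0 := V_nonneg n x ltac:(lia) Hx); assert (Hm0 := V_nonneg N' x ltac:(lia) Hx).
    assert (Hnb := Hup n x ltac:(lia) Hx); assert (Hmb := Hup N' x ltac:(lia) Hx).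
    set (t := tail_sum e N' (n - N')) in *.
    assert (t * V n x <= s * Cb) by (apply Rmult_le_compat; lra).
    assert (t * V N' x <= s * Cb) by (apply Rmult_le_compat; lra).
    unfold Rabs; destruct Rcase_abs; nra. }
  intros n m x Hn Hm Hx.
  assert (A := Hnear n x Hn Hx); assert (B := Hnear m x Hm Hx).
  assert (2 * (s * Cb) <= eps) by nra.
  unfold Rabs in *; repeat destruct Rcase_abs; lra.
Qed.

End RelativeIncrements.

Lemma Un_cv_abs_sub_le u l c e N : Un_cv u l ->
  (forall m, (N <= m)%nat -> Rabs (u m - c) <= e) -> Rabs (l - c) <= e.
Proof.
  intros Hl Hm; destruct (Rle_lt_dec (Rabs (l - c)) e) as [H|H]; [exact H|]; exfalso.
  destruct (Hl (Rabs (l - c) - e)) as [N' HN']; [lra|].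
  specialize (HN' (Nat.max N N') ltac:(lia)); specialize (Hm (Nat.max N N') ltac:(lia)).
  unfold R_dist, Rabs in *; repeat destruct Rcase_abs; lra.
Qed.

Lemma unif_cv_of_unif_cauchy P f L : unif_cauchy_on P f ->
  (forall x, P x -> Un_cv (fun n => f n x) (L x)) -> unif_cv_on P f L.
Proof.
  intros Hc HL e He; destruct (Hc (e / 2)) as [N HN]; [lra|].
  exists N; intros n x Hn Hx.
  assert (Rabs (L x - f n x) <= e / 2) by
    (apply (Un_cv_abs_sub_le _ _ _ _ N (HL x Hx)); intros m Hm; apply HN; auto).
  rewrite Rabs_minus_sym; lra.
Qed.

Lemma unif_cauchy_bounded {X : Type} (P : X -> Prop) (f : nat -> X -> R) :
  unif_cauchy_on P f -> (forall k, exists C, forall x, P x -> f k x <= C) ->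
  exists C, forall k x, P x -> f k x <= C.
Proof.
  intros Hc Hk; destruct (Hc 1) as [N HN]; [lra|].
  assert (Hfin : forall m, exists C, forall k x, (k <= m)%nat -> P x -> f k x <= C).
  { induction m as [|m [C IH]].
    - destruct (Hk 0%nat) as [C HC]; exists C; intros k x Hkm Hx.
      replace k with 0%nat by lia; auto.
    - destruct (Hk (S m)) as [C' HC']; exists (Rmax C C'); intros k x Hkm Hx.
      destruct (Nat.eq_dec k (S m)) as [->|Hne].
      + eapply Rle_trans; [apply HC'; exact Hx | apply Rmax_r].
      + eapply Rle_trans; [apply IH; [lia | exact Hx] | apply Rmax_l]. }
  destruct (Hfin N) as [C HC]; exists (C + 1); intros k x Hx.
  destruct (Nat.le_gt_cases k N) as [Hkn|Hkn]; [assert (H := HC k x Hkn Hx); lra|].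
  assert (H := HN k N x ltac:(lia) (le_n _) Hx); assert (H' := HC N x (le_n _) Hx).
  unfold Rabs in H; destruct Rcase_abs; lra.
Qed.

Lemma unif_cv_on_compact f L :
  (forall M, 0 <= M -> unif_cv_on (fun x => Rabs x <= M) f L) ->
  forall K, compact K -> unif_cv_on K f L.
Proof.
  intros H K HK e He; destruct (compact_P1 K HK) as [m [M HmM]].
  assert (0 <= Rabs m + Rabs M) by (assert (H1 := Rabs_pos m); assert (H2 := Rabs_pos M); lra).
  destruct (H (Rabs m + Rabs M) ltac:(assumption) e He) as [N HN].
  exists N; intros n x Hn Hx; apply HN; [exact Hn|].
  destruct (HmM x Hx); unfold Rabs; repeat destruct Rcase_abs; lra.
Qed.

Lemma Un_cv_of_unif_cv_intervals f L :
  (forall M, 0 <= M -> unif_cv_on (fun x => Rabs x <= M) f L) ->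
  forall w, Un_cv (fun n => f n w) (L w).
Proof.
  intros H w e He; destruct (H (Rabs w) (Rabs_pos w) e He) as [N HN].
  exists N; intros n Hn; apply HN; [exact Hn | apply Rle_refl].
Qed.

Lemma weighted_sum_le (t u : nat -> R) e c N : 0 <= e -> 0 <= c -> (forall k, 0 <= u k) ->
  (forall k, (N <= k)%nat -> Rabs (t k) <= e * u k) -> (forall k, Rabs (t k) <= c) ->
  forall n, Rabs (sum_f_R0 t n) <= e * sum_f_R0 u n + INR N * c.
Proof.
  intros He Hc Hu H1 H2 n.
  assert (Hs : Rabs (sum_f_R0 t n) <= e * sum_f_R0 u n + INR (Nat.min (S n) N) * c).
  { induction n as [|n IH]; simpl sum_f_R0.
    - assert (0 <= e * u 0%nat) by (apply Rmult_le_pos; auto).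
      destruct N as [|N]; simpl.
      + specialize (H1 0%nat ltac:(lia)); lra.
      + replace (Nat.min 1 (S N)) with 1%nat by lia; specialize (H2 0%nat); simpl; lra.
    - eapply Rle_trans; [apply Rabs_triang|].
      assert (0 <= e * u (S n)) by (apply Rmult_le_pos; auto).
      rewrite Rmult_plus_distr_l.
      destruct (Nat.le_gt_cases N (S n)) as [HN|HN].
      + replace (Nat.min (S (S n)) N) with (Nat.min (S n) N) by lia.
        specialize (H1 (S n) HN); lra.
      + replace (Nat.min (S (S n)) N) with (S (Nat.min (S n) N)) by lia.
        rewrite S_INR; specialize (H2 (S n)); lra. }
  assert (INR (Nat.min (S n) N) <= INR N) by (apply le_INR; lia).
  assert (INR (Nat.min (S n) N) * c <= INR N * c) by (apply Rmult_le_compat_r; lra).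
  lra.
Qed.

(** * The Lyapunov form *)

Lemma Rabs_mult3_le w a b M : Rabs w <= M -> Rabs (w * a * b) <= M * (a ^ 2 + b ^ 2) / 2.
Proof.
  intro Hw; rewrite Rmult_assoc, Rabs_mult.
  assert (Hab := Rabs_mult_le_sum_sq a b).
  assert (0 <= Rabs w) by apply Rabs_pos; assert (0 <= Rabs (a * b)) by apply Rabs_pos.
  assert (Rabs w * Rabs (a * b) <= M * ((a ^ 2 + b ^ 2) / 2)) by (apply Rmult_le_compat; lra).
  lra.
Qed.

Definition lyapunov_form (G D w a b : R) : R := G * (a ^ 2 + b ^ 2) - w * a * b - D * a ^ 2.

Lemma lyapunov_form_abs_le G D w a b M : 0 <= G -> Rabs w <= M ->
  Rabs (lyapunov_form G D w a b) <= (G + M + Rabs D) * (a ^ 2 + b ^ 2).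
Proof.
  intros HG Hw; unfold lyapunov_form.
  assert (Hwab := Rabs_mult3_le w a b M Hw).
  assert (0 <= a ^ 2) by apply pow2_ge_0; assert (0 <= b ^ 2) by apply pow2_ge_0.
  assert (HDa : Rabs (D * a ^ 2) <= Rabs D * (a ^ 2 + b ^ 2)).
  { rewrite Rabs_mult, (Rabs_pos_eq (a ^ 2)) by lra.
    apply Rmult_le_compat_l; [apply Rabs_pos | lra]. }
  assert (0 <= G * (a ^ 2 + b ^ 2)) by nra.
  assert (0 <= M) by (assert (0 <= Rabs w) by apply Rabs_pos; lra).
  assert (0 <= M * (a ^ 2 + b ^ 2)) by nra.
  unfold Rabs in *; repeat destruct Rcase_abs; lra.
Qed.

Lemma lyapunov_form_lower G D w a b M : Rabs w <= M -> M + 2 * Rabs D <= G ->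
  G / 2 * (a ^ 2 + b ^ 2) <= lyapunov_form G D w a b.
Proof.
  intros Hw HG; unfold lyapunov_form.
  assert (Hwab := Rle_trans _ _ _ (Rle_abs _) (Rabs_mult3_le w a b M Hw)).
  assert (0 <= a ^ 2) by apply pow2_ge_0; assert (0 <= b ^ 2) by apply pow2_ge_0.
  assert (D * a ^ 2 <= Rabs D * (a ^ 2 + b ^ 2)) by
    (assert (D <= Rabs D) by apply Rle_abs; assert (0 <= Rabs D) by apply Rabs_pos; nra).
  assert (0 <= (G / 2 - M / 2 - Rabs D) * (a ^ 2 + b ^ 2)) by (apply Rmult_le_pos; lra).
  lra.
Qed.

(* [(w b - G1 a) / G2] is the next term of the recurrence; the increment of the form is
   [- D2 a^2 + D1 (D1 a^2 + w a b) / G2] with [D1 = G2 - G1] and [D2 = D1 - (G1 - G0)],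
   so it carries either a second difference or a product of two first differences. *)
Lemma lyapunov_form_increment_le G0 G1 G2 w a b M :
  0 <= M -> 0 < G1 -> 0 < G2 -> Rabs w <= M -> M + 2 * Rabs (G1 - G0) <= G1 ->
  Rabs (G2 - G1) <= 1 ->
  Rabs (lyapunov_form G2 (G2 - G1) w b ((w * b - G1 * a) / G2) - lyapunov_form G1 (G1 - G0) w a b)
  <= (2 * Rabs ((G2 - G1) - (G1 - G0)) / G1 + 2 * (1 + M) * Rabs (G2 - G1) / (G1 * G2))
     * lyapunov_form G1 (G1 - G0) w a b.
Proof.
  intros HM HG1 HG2 Hw HD HD1.
  set (D1 := G2 - G1) in *; set (D2 := D1 - (G1 - G0)); set (Q := a ^ 2 + b ^ 2).
  set (V := lyapunov_form G1 (G1 - G0) w a b).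
  assert (Hlow : G1 / 2 * Q <= V) by exact (lyapunov_form_lower G1 (G1 - G0) w a b M Hw HD).
  assert (Hid : lyapunov_form G2 D1 w b ((w * b - G1 * a) / G2) - V
                = - D2 * a ^ 2 + D1 * (D1 * a ^ 2 + w * a * b) / G2).
  { unfold V, lyapunov_form, D2, D1; field; lra. }
  rewrite Hid.
  assert (Ha : 0 <= a ^ 2) by apply pow2_ge_0; assert (Hb : 0 <= b ^ 2) by apply pow2_ge_0.
  assert (HD1a : Rabs (D1 * a ^ 2) <= Q) by
    (rewrite Rabs_mult, (Rabs_pos_eq (a ^ 2)) by lra; unfold Q; nra).
  assert (Hinner : Rabs (D1 * (D1 * a ^ 2 + w * a * b) / G2) <= Rabs D1 * ((1 + M) * Q) / G2).
  { unfold Rdiv; rewrite !Rabs_mult, Rabs_inv, (Rabs_pos_eq G2) by lra.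
    apply Rmult_le_compat_r; [left; apply Rinv_0_lt_compat; lra|].
    apply Rmult_le_compat_l; [apply Rabs_pos|].
    eapply Rle_trans; [apply Rabs_triang|].
    assert (H := Rabs_mult3_le w a b M Hw); fold Q in H.
    assert (0 <= M * Q) by (unfold Q; nra); lra. }
  assert (HD2a : Rabs (- D2 * a ^ 2) <= Rabs D2 * Q).
  { rewrite Rabs_mult, Rabs_Ropp, (Rabs_pos_eq (a ^ 2)) by lra.
    apply Rmult_le_compat_l; [apply Rabs_pos | unfold Q; lra]. }
  assert (HQ : Q <= 2 / G1 * V).
  { apply (Rmult_le_reg_l (G1 / 2)); [lra|].
    replace (G1 / 2 * (2 / G1 * V)) with V by (field; lra); lra. }
  eapply Rle_trans; [apply Rabs_triang|].
  assert (0 <= Rabs D2) by apply Rabs_pos; assert (0 <= Rabs D1) by apply Rabs_pos.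
  assert (0 <= Rabs D2 * Q <= Rabs D2 * (2 / G1 * V)) by
    (split; [apply Rmult_le_pos; unfold Q; lra | apply Rmult_le_compat_l; lra]).
  assert (Rabs D1 * ((1 + M) * Q) / G2 <= Rabs D1 * ((1 + M) * (2 / G1 * V)) / G2).
  { unfold Rdiv at 1 3; apply Rmult_le_compat_r; [left; apply Rinv_0_lt_compat; lra|].
    apply Rmult_le_compat_l; [lra|]; apply Rmult_le_compat_l; lra. }
  replace ((2 * Rabs D2 / G1 + 2 * (1 + M) * Rabs D1 / (G1 * G2)) * V)
    with (Rabs D2 * (2 / G1 * V) + Rabs D1 * ((1 + M) * (2 / G1 * V)) / G2) by (field; lra).
  lra.
Qed.

Definition lyapunov (g : nat -> R) (n : nat) (w : R) : R :=
  lyapunov_form (g (S n)) (Defs.Delta g n) w (p g (S n) w) (p g (S (S n)) w).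

Definition lyapunov_rate (g : nat -> R) (M : R) (n : nat) : R :=
  2 * Rabs (Delta2 g n) / g (S n)
  + 2 * (1 + M) * Rabs (Defs.Delta g (S n)) / (g (S n) * g (S (S n))).

Definition energy (g : nat -> R) (n : nat) (w : R) : R := g n * (p g n w ^ 2 + p g (S n) w ^ 2).

Section Sequence.

Variable g : nat -> R.
Hypothesis hpos : forall n, 0 < g n.
Hypothesis h1 : cond1 g.
Hypothesis h2 : cond2 g.

Lemma eventually_slowly_growing M :
  exists N, forall n, (N <= n)%nat -> Rabs (Defs.Delta g n) <= 1 /\ M + 2 <= g n.
Proof.
  destruct (h2 1) as [N1 HN1]; [lra|].
  destruct (h1 (M + 2)) as [N2 HN2].
  exists (Nat.max N1 N2); intros n Hn.
  specialize (HN1 n ltac:(lia)); specialize (HN2 n ltac:(lia)).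
  unfold R_dist in HN1; rewrite Rminus_0_r in HN1; lra.
Qed.

Lemma lyapunov_eventually M : 0 <= M ->
  exists N, forall n w, (N <= n)%nat -> Rabs w <= M ->
    Rabs (Defs.Delta g n) <= 1 /\
    g (S n) / 2 * (p g (S n) w ^ 2 + p g (S (S n)) w ^ 2) <= lyapunov g n w /\
    Rabs (lyapunov g (S n) w - lyapunov g n w) <= lyapunov_rate g M n * lyapunov g n w.
Proof.
  intros HM; destruct (eventually_slowly_growing M) as [N HN]; exists N; intros n w Hn Hw.
  destruct (HN n Hn) as [D0 _]; destruct (HN (S n) ltac:(lia)) as [D1 G1].
  assert (Hc : M + 2 * Rabs (g (S n) - g n) <= g (S n)) by (unfold Defs.Delta in D0; lra).
  split; [exact D0|]; split.
  - exact (lyapunov_form_lower _ _ w _ _ M Hw Hc).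
  - unfold lyapunov, lyapunov_rate, Delta2, Defs.Delta; rewrite (p_SS g w (S n)).
    exact (lyapunov_form_increment_le (g n) (g (S n)) (g (S (S n))) w _ _ M
             HM (hpos _) (hpos _) Hw Hc D1).
Qed.

Lemma lyapunov_rate_nonneg M n : 0 <= M -> 0 <= lyapunov_rate g M n.
Proof.
  intro HM; unfold lyapunov_rate.
  assert (H1 := hpos (S n)); assert (H2 := hpos (S (S n))).
  assert (0 <= Rabs (Delta2 g n)) by apply Rabs_pos.
  assert (0 <= Rabs (Defs.Delta g (S n))) by apply Rabs_pos.
  assert (0 <= 2 * Rabs (Delta2 g n) / g (S n)) by (apply Rle_mult_inv_pos; lra).
  assert (0 <= 2 * (1 + M) * Rabs (Defs.Delta g (S n)) / (g (S n) * g (S (S n)))).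
  { apply Rle_mult_inv_pos; [|nra]. apply Rmult_le_pos; lra. }
  lra.
Qed.

Lemma p_locally_bounded M : 0 <= M -> forall n, exists C, 0 <= C /\
  forall w, Rabs w <= M -> Rabs (p g n w) <= C /\ Rabs (p g (S n) w) <= C.
Proof.
  intros HM n; induction n as [|n [C [HC IH]]].
  - assert (H0 := hpos 0%nat).
    assert (0 <= M / g 0%nat) by (apply Rle_mult_inv_pos; lra).
    exists (1 + M / g 0%nat); split; [lra|]; intros w Hw.
    rewrite p_0, p_1, Rabs_R1; split; [lra|].
    unfold Rdiv; rewrite Rabs_mult, Rabs_inv, (Rabs_pos_eq (g 0%nat)) by lra.
    assert (Rabs w * / g 0%nat <= M * / g 0%nat) by
      (apply Rmult_le_compat_r; [left; apply Rinv_0_lt_compat|]; lra).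
    unfold Rdiv in *; lra.
  - assert (Hn := hpos n); assert (Hn1 := hpos (S n)).
    assert (0 <= (M * C + g n * C) / g (S n)) by (apply Rle_mult_inv_pos; nra).
    exists (C + (M * C + g n * C) / g (S n)); split; [lra|]; intros w Hw.
    destruct (IH w Hw) as [I1 I2]; split; [lra|].
    rewrite p_SS; unfold Rdiv; rewrite Rabs_mult, Rabs_inv, (Rabs_pos_eq (g (S n))) by lra.
    assert (Rabs (w * p g (S n) w - g n * p g n w) <= M * C + g n * C).
    { unfold Rminus; eapply Rle_trans; [apply Rabs_triang|].
      rewrite Rabs_Ropp, !Rabs_mult, (Rabs_pos_eq (g n)) by lra.
      assert (Rabs w * Rabs (p g (S n) w) <= M * C) by
        (apply Rmult_le_compat; try apply Rabs_pos; lra).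
      assert (g n * Rabs (p g n w) <= g n * C) by (apply Rmult_le_compat_l; lra).
      lra. }
    assert (Rabs (w * p g (S n) w - g n * p g n w) * / g (S n) <= (M * C + g n * C) * / g (S n))
      by (apply Rmult_le_compat_r; [left; apply Rinv_0_lt_compat|]; lra).
    unfold Rdiv in *; lra.
Qed.

Lemma energy_nonneg n w : 0 <= energy g n w.
Proof.
  unfold energy; assert (Hg := hpos n).
  assert (0 <= p g n w ^ 2) by apply pow2_ge_0; assert (0 <= p g (S n) w ^ 2) by apply pow2_ge_0.
  nra.
Qed.

Lemma energy_locally_bounded M : 0 <= M -> forall n,
  exists K, forall w, Rabs w <= M -> energy g n w <= K.
Proof.
  intros HM n; destruct (p_locally_bounded M HM n) as [C [_ HC]].
  exists (g n * (2 * C ^ 2)); intros w Hw; destruct (HC w Hw) as [H1 H2].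
  apply sq_le_of_Rabs_le in H1; apply sq_le_of_Rabs_le in H2.
  unfold energy; assert (Hg := hpos n); nra.
Qed.

Lemma lyapunov_locally_bounded M : 0 <= M -> forall n,
  exists K, forall w, Rabs w <= M -> lyapunov g n w <= K.
Proof.
  intros HM n; destruct (p_locally_bounded M HM (S n)) as [C [_ HC]].
  set (K := g (S n) + M + Rabs (Defs.Delta g n)).
  assert (HK : 0 <= K) by (assert (Hg := hpos (S n)); assert (H := Rabs_pos (Defs.Delta g n));
                           unfold K; lra).
  exists (K * (2 * C ^ 2)); intros w Hw; destruct (HC w Hw) as [H1 H2].
  apply sq_le_of_Rabs_le in H1; apply sq_le_of_Rabs_le in H2.
  assert (H := lyapunov_form_abs_le (g (S n)) (Defs.Delta g n) w (p g (S n) w) (p g (S (S n)) w) M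
                 (Rlt_le _ _ (hpos _)) Hw).
  fold K in H; unfold lyapunov; eapply Rle_trans; [apply Rle_abs|].
  eapply Rle_trans; [exact H|]; apply Rmult_le_compat_l; lra.
Qed.

(* Summation by parts: [energy k / g k = p_k^2 + p_(k+1)^2] telescopes against [2 p_k^2]. *)
Lemma sum_p_sq_identity w L n :
  2 * sum_f_R0 (fun k => p g k w ^ 2) n - L * sum_f_R0 (fun k => / g k) n
  = sum_f_R0 (fun k => (energy g k w - L) / g k) n + 1 - p g (S n) w ^ 2.
Proof.
  induction n as [|n IH].
  - simpl; unfold energy; rewrite p_0; assert (H := hpos 0%nat); field; lra.
  - rewrite !tech5; assert (H := hpos (S n)).
    replace ((energy g (S n) w - L) / g (S n))
      with (p g (S n) w ^ 2 + p g (S (S n)) w ^ 2 - L * / g (S n)) by (unfold energy; field; lra).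
    lra.
Qed.

Lemma sum_inv_pos n : 0 < sum_f_R0 (fun k => / g k) n.
Proof.
  induction n; simpl; [|assert (0 < / g (S n)) by apply Rinv_0_lt_compat, hpos; lra].
  apply Rinv_0_lt_compat, hpos.
Qed.

Lemma ratio_sub_half w L n :
  sum_f_R0 (fun k => p g k w ^ 2) n / sum_f_R0 (fun k => / g k) n - / 2 * L
  = (sum_f_R0 (fun k => (energy g k w - L) / g k) n + 1 - p g (S n) w ^ 2)
    / (2 * sum_f_R0 (fun k => / g k) n).
Proof.
  rewrite <- sum_p_sq_identity; assert (H := sum_inv_pos n); field; lra.
Qed.

Section Summable.

Hypothesis h6 : cond6 g.
Hypothesis h7 : cond7 g.

Lemma lyapunov_rate_small_tails M : 0 <= M -> small_tails (lyapunov_rate g M).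
Proof.
  intros HM.
  destruct (eventually_slowly_growing 0) as [N HN].
  (* [g (S n) >= g n / 2] eventually, since [|Delta g n| <= 1 <= g n / 2]. *)
  assert (Hhalf : forall n, (N <= n)%nat -> / g (S n) <= 2 / g n).
  { intros n Hn; destruct (HN n Hn) as [D G].
    assert (Hg := hpos n); unfold Defs.Delta, Rabs in D; destruct Rcase_abs.
    all: replace (2 / g n) with (/ (g n / 2)) by (field; lra).
    all: apply Rinv_le_contravar; lra. }
  apply small_tails_plus.
  - apply (small_tails_le (fun n => Rabs (Delta2 g n) / g n) _ 4 0);
      [apply small_tails_of_series_converges, h7 | lra|].
    exists N; intros n Hn; rewrite Nat.add_0_r.
    assert (H := Hhalf n Hn); assert (0 <= Rabs (Delta2 g n)) by apply Rabs_pos.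
    assert (Hg := hpos (S n)).
    split; [apply Rle_mult_inv_pos; lra|].
    unfold Rdiv in *; nra.
  - apply (small_tails_le (fun n => Rabs (Defs.Delta g n) / g n ^ 2) _ (4 * (1 + M)) 1);
      [apply small_tails_of_series_converges, h6 | lra|].
    exists N; intros n Hn; rewrite Nat.add_1_r.
    assert (H := Hhalf (S n) ltac:(lia)); assert (0 <= Rabs (Defs.Delta g (S n))) by apply Rabs_pos.
    assert (Hg1 := hpos (S n)); assert (Hg2 := hpos (S (S n))).
    assert (Hi1 : 0 < / g (S n)) by (apply Rinv_0_lt_compat; lra).
    assert (Hi2 : 0 < / g (S (S n))) by (apply Rinv_0_lt_compat; lra).
    unfold Rdiv in *; rewrite Rinv_mult; replace (g (S n) ^ 2) with (g (S n) * g (S n)) by ring;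
      rewrite Rinv_mult.
    split; [apply Rmult_le_pos; [|nra]; apply Rmult_le_pos; lra|].
    assert (0 <= 2 * (1 + M) * Rabs (Defs.Delta g (S n))) by (apply Rmult_le_pos; lra).
    assert (/ g (S n) * / g (S (S n)) <= / g (S n) * (2 * / g (S n))) by
      (apply Rmult_le_compat_l; lra).
    nra.
Qed.

Section Interval.

Variable M : R.
Hypothesis HM : 0 <= M.

Lemma lyapunov_bounded_unif_cauchy : exists N Cb, 0 <= Cb /\
  (forall n w, (N <= n)%nat -> Rabs w <= M ->
    Rabs (Defs.Delta g n) <= 1 /\
    g (S n) / 2 * (p g (S n) w ^ 2 + p g (S (S n)) w ^ 2) <= lyapunov g n w <= Cb) /\
  unif_cauchy_on (fun x => Rabs x <= M) (lyapunov g).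
Proof.
  destruct (lyapunov_eventually M HM) as [N0 HN0].
  assert (Hnonneg : forall n w, (N0 <= n)%nat -> Rabs w <= M -> 0 <= lyapunov g n w).
  { intros n w Hn Hw; destruct (HN0 n w Hn Hw) as [_ [H _]].
    assert (Hg := hpos (S n)); assert (H' := energy_nonneg (S n) w); unfold energy in H'; nra. }
  assert (Hincr := fun n w Hn Hw => proj2 (proj2 (HN0 n w Hn Hw))).
  assert (He := fun n => lyapunov_rate_nonneg M n HM).
  assert (Ht := lyapunov_rate_small_tails M HM).
  destruct (relative_increments_bounded R (fun x => Rabs x <= M) (lyapunov g) (lyapunov_rate g M) N0
              He Ht Hnonneg Hincr (lyapunov_locally_bounded M HM)) as [N [Cb [HCb Hup]]].
  exists (Nat.max N0 N), Cb; split; [exact HCb|]; split.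
  - intros n w Hn Hw; destruct (HN0 n w ltac:(lia) Hw) as [D [L _]].
    split; [exact D|]; split; [exact L | apply Hup; [lia | exact Hw]].
  - exact (relative_increments_unif_cauchy R _ _ _ N0 He Ht Hnonneg Hincr N Cb HCb Hup).
Qed.

(* [energy (S n) - lyapunov n = w a b + Delta a^2] is [O(a^2 + b^2) = O(lyapunov n / g (S n))]. *)
Lemma energy_unif_cauchy : unif_cauchy_on (fun x => Rabs x <= M) (energy g).
Proof.
  destruct lyapunov_bounded_unif_cauchy as [N [Cb [HCb [Hb Hc]]]].
  assert (Hclose : forall n w, (N <= n)%nat -> Rabs w <= M ->
            g (S n) * Rabs (energy g (S n) w - lyapunov g n w) <= 2 * (M + 1) * Cb).
  { intros n w Hn Hw; destruct (Hb n w Hn Hw) as [D [L U]].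
    set (a := p g (S n) w) in *; set (b := p g (S (S n)) w) in *.
    replace (energy g (S n) w - lyapunov g n w) with (w * a * b + Defs.Delta g n * a ^ 2)
      by (unfold energy, lyapunov, lyapunov_form, a, b; ring).
    assert (Ha : 0 <= a ^ 2) by apply pow2_ge_0; assert (0 <= b ^ 2) by apply pow2_ge_0.
    assert (H1 := Rabs_mult3_le w a b M Hw).
    assert (H2 : Rabs (Defs.Delta g n * a ^ 2) <= a ^ 2 + b ^ 2) by
      (rewrite Rabs_mult, (Rabs_pos_eq (a ^ 2)) by lra; nra).
    assert (Rabs (w * a * b + Defs.Delta g n * a ^ 2) <= (M + 1) * (a ^ 2 + b ^ 2)) by
      (eapply Rle_trans; [apply Rabs_triang|]; nra).
    assert (Hg := hpos (S n)); nra. }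
  intros e He.
  destruct (Hc (e / 3)) as [N' HN']; [lra|].
  destruct (h1 (6 * (M + 1) * Cb / e)) as [N3 HN3].
  assert (Hd : forall n w, (Nat.max (Nat.max N N') N3 <= n)%nat -> Rabs w <= M ->
             Rabs (energy g (S n) w - lyapunov g n w) <= e / 3).
  { intros n w Hn Hw; assert (H := Hclose n w ltac:(lia) Hw).
    assert (G := HN3 (S n) ltac:(lia)); assert (Hg := hpos (S n)).
    assert (HG : 6 * (M + 1) * Cb < e * g (S n)).
    { apply (Rmult_lt_compat_l e) in G; [|lra].
      unfold Rdiv in G; rewrite Rmult_comm, Rmult_assoc, Rinv_l, Rmult_1_r in G by lra; lra. }
    assert (0 <= Rabs (energy g (S n) w - lyapunov g n w)) by apply Rabs_pos.
    nra. }
  exists (S (Nat.max (Nat.max N N') N3)); intros [|n] [|m] w Hn Hm Hw; try lia.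
  assert (A1 := Hd n w ltac:(lia) Hw); assert (A2 := Hd m w ltac:(lia) Hw).
  assert (A3 := HN' n m w ltac:(lia) ltac:(lia) Hw).
  unfold Rabs in *; repeat destruct Rcase_abs; lra.
Qed.

End Interval.

Lemma energy_cv : exists LB, forall w, Un_cv (fun n => energy g n w) (LB w).
Proof.
  assert (HC : forall w, Cauchy_crit (fun n => energy g n w)).
  { intros w e He; destruct (energy_unif_cauchy (Rabs w) (Rabs_pos w) (e / 2)) as [N HN]; [lra|].
    exists N; intros n m Hn Hm; unfold R_dist.
    assert (H := HN n m w Hn Hm (Rle_refl _)); lra. }
  exists (fun w => proj1_sig (R_complete _ (HC w))).
  intro w; exact (proj2_sig (R_complete _ (HC w))).
Qed.

Lemma energy_unif_cv LB : (forall w, Un_cv (fun n => energy g n w) (LB w)) ->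
  forall M, 0 <= M -> unif_cv_on (fun x => Rabs x <= M) (energy g) LB.
Proof.
  intros HLB M HM; apply unif_cv_of_unif_cauchy; [exact (energy_unif_cauchy M HM)|].
  intros x _; exact (HLB x).
Qed.

Lemma energy_unif_bounded M : 0 <= M ->
  exists Bb, forall n w, Rabs w <= M -> energy g n w <= Bb.
Proof.
  intro HM; exact (unif_cauchy_bounded _ _ (energy_unif_cauchy M HM) (energy_locally_bounded M HM)).
Qed.

Section Ratio.

Hypothesis h4 : cond4 g.
Variable LB : R -> R.
Hypothesis HLB : forall w, Un_cv (fun n => energy g n w) (LB w).

(* [0 <= energy <= Bb] passes to the limit as [|LB - Bb / 2| <= Bb / 2]. *)
Lemma energy_sub_limit_le M Bb : (forall n w, Rabs w <= M -> energy g n w <= Bb) ->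
  forall n w, Rabs w <= M -> Rabs (energy g n w - LB w) <= Bb.
Proof.
  intros HBb n w Hw.
  assert (Rabs (LB w - Bb / 2) <= Bb / 2).
  { apply (Un_cv_abs_sub_le _ _ _ _ 0 (HLB w)); intros m _.
    assert (H1 := HBb m w Hw); assert (H2 := energy_nonneg m w).
    unfold Rabs; destruct Rcase_abs; lra. }
  assert (H1 := HBb n w Hw); assert (H2 := energy_nonneg n w).
  unfold Rabs in *; repeat destruct Rcase_abs; lra.
Qed.

Lemma ratio_numerator_le M eps : 0 <= M -> eps > 0 -> exists K, forall n w, Rabs w <= M ->
  Rabs (sum_f_R0 (fun k => (energy g k w - LB w) / g k) n + 1 - p g (S n) w ^ 2)
  <= eps * sum_f_R0 (fun k => / g k) n + K.
Proof.
  intros HM Heps.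
  destruct (energy_unif_bounded M HM) as [Bb HBb].
  destruct (cauchy_bound _ (CV_Cauchy _ (exist _ 0 (cv_infty_cv_0 g h1)))) as [Gb HGb].
  assert (HGn : forall n, / g n <= Gb) by (intro n; apply HGb; exists n; reflexivity).
  assert (Hinv : forall k, 0 < / g k) by (intro; apply Rinv_0_lt_compat, hpos).
  assert (HBb0 : 0 <= Bb) by (assert (H := HBb 0%nat 0 ltac:(rewrite Rabs_R0; lra));
                             assert (H' := energy_nonneg 0%nat 0); lra).
  assert (HGb0 : 0 <= Gb) by (assert (H := HGn 0%nat); assert (H' := Hinv 0%nat); lra).
  destruct (energy_unif_cv LB HLB M HM eps Heps) as [N HN].
  exists (INR N * (Bb * Gb) + 1 + Bb * Gb); intros n w Hw.
  set (t := fun k => (energy g k w - LB w) / g k).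
  assert (Ht_tail : forall k, (N <= k)%nat -> Rabs (t k) <= eps * / g k).
  { intros k Hk; unfold t, Rdiv; rewrite Rabs_mult, (Rabs_pos_eq (/ g k)) by (left; auto).
    apply Rmult_le_compat_r; [left; auto | left; apply HN; auto]. }
  assert (Ht_all : forall k, Rabs (t k) <= Bb * Gb).
  { intro k; unfold t, Rdiv; rewrite Rabs_mult, (Rabs_pos_eq (/ g k)) by (left; auto).
    apply Rmult_le_compat; [apply Rabs_pos | left; auto | | auto].
    exact (energy_sub_limit_le M Bb HBb k w Hw). }
  assert (Hsum := weighted_sum_le t (fun k => / g k) eps (Bb * Gb) N ltac:(lra) ltac:(nra)
                    (fun k => Rlt_le _ _ (Hinv k)) Ht_tail Ht_all n).
  assert (Hp : 0 <= p g (S n) w ^ 2 <= Bb * Gb).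
  { assert (H1 := HBb n w Hw); assert (H2 := HGn n); assert (Hg := hpos n).
    assert (0 <= p g n w ^ 2) by apply pow2_ge_0; split; [apply pow2_ge_0|].
    replace (p g (S n) w ^ 2) with (energy g n w * / g n - p g n w ^ 2)
      by (unfold energy; field; lra).
    assert (H3 := energy_nonneg n w); assert (H4 := Hinv n); nra. }
  fold t; set (St := sum_f_R0 t n) in *.
  assert (Rabs (St + 1 - p g (S n) w ^ 2) <= Rabs St + 1 + p g (S n) w ^ 2) by
    (unfold Rabs; repeat destruct Rcase_abs; lra).
  lra.
Qed.

Lemma ratio_unif_cv M : 0 <= M ->
  unif_cv_on (fun x => Rabs x <= M)
    (fun n w => sum_f_R0 (fun k => p g k w ^ 2) n / sum_f_R0 (fun k => / g k) n)
    (fun w => / 2 * LB w).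
Proof.
  intros HM eps Heps.
  destruct (ratio_numerator_le M eps HM Heps) as [K HK].
  destruct (h4 (Rmax K 0 / eps)) as [N HN].
  exists N; intros n w Hn Hw; unfold R_dist; rewrite ratio_sub_half.
  set (D := sum_f_R0 (fun k => / g k) n) in *.
  assert (HD0 : 0 < D) by apply sum_inv_pos.
  assert (HD : K < eps * D).
  { specialize (HN n Hn); fold D in HN; assert (H := Rmax_l K 0).
    apply (Rmult_lt_compat_l eps) in HN; [|lra].
    unfold Rdiv in HN; rewrite Rmult_comm, Rmult_assoc, Rinv_l, Rmult_1_r in HN by lra; lra. }
  assert (Hnum := HK n w Hw); fold D in Hnum.
  unfold Rdiv; rewrite Rabs_mult, (Rabs_pos_eq (/ (2 * D))) by (left; apply Rinv_0_lt_compat; lra).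
  apply (Rmult_lt_reg_r (2 * D)); [lra|]; rewrite Rmult_assoc, Rinv_l, Rmult_1_r by lra.
  lra.
Qed.

End Ratio.

End Summable.

End Sequence.

Theorem corollary3 (g : nat -> R) (hpos : forall n, 0 < g n)
  (h1 : cond1 g) (h2 : cond2 g) (h3 : cond3 g) (h4 : cond4 g) (h5 : cond5 g) (h6 : cond6 g) (h7 : cond7 g) :
  let A := fun n w => sum_f_R0 (fun k => (p g k w) ^ 2) n
                      / sum_f_R0 (fun k => / g k) n in
  let B := fun n w => g n * ((p g n w) ^ 2 + (p g (S n) w) ^ 2) in
  exists LA LB : R -> R,
    (forall w, Un_cv (fun n => A n w) (LA w)) /\
    (forall w, Un_cv (fun n => B n w) (LB w)) /\
    (forall w, LA w = / 2 * LB w) /\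
    (forall K : R -> Prop, compact K -> unif_cv_on K A LA /\ unif_cv_on K B LB).
Proof.
  intros A B.
  destruct (energy_cv g hpos h1 h2 h6 h7) as [LB HLB].
  assert (UA := ratio_unif_cv g hpos h1 h2 h6 h7 h4 LB HLB).
  assert (UB := energy_unif_cv g hpos h1 h2 h6 h7 LB HLB).
  exists (fun w => / 2 * LB w), LB.
  split; [exact (Un_cv_of_unif_cv_intervals _ _ UA)|].
  split; [exact (Un_cv_of_unif_cv_intervals _ _ UB)|].
  split; [reflexivity|].
  intros K HK; split; apply unif_cv_on_compact; assumption.
Qed.
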